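(* Let $\mathcal{S}$ be a finite set of road segments and $y_1,\dots,y_N$ (collectively $y_{[N]}$) the routes of $N$ historical trips, each a nonempty set of distinct segments. For each $n$ and $s\in y_n$ one observes $T'_{n,s}=\theta_s+\varepsilon_{n,s}$, where the $\theta_s$ are i.i.d. with mean $\mu$ and variance $\tau^2>0$, independent of the errors; for each $n$ the errors $(\varepsilon_{n,s})_{s\in y_n}$ have mean $0$ and covariances $\sigma_{s,t}$; errors from different trips are independent. Fix a route $y$ and suppose $\sigma_{s,t}\ge0$ for all $s,t\in y$. Let $\hat\Theta^{\ast(\mathrm{seg})}_y$ be the optimal segment-based estimator, $\hat\Theta^{\ast(\mathrm{g\text{-}seg})}_y$ the optimal generalized segment-based estimator with the single super-segment partition $\mathscr{S}_y=\{y\}$, and $\hat\Theta^{\ast(\mathrm{route})}_y$ the optimal route-based estimator with neighborhood $\delta(y)=\{y_n:y_n=y\}$. Then for any set of historical routes, $$R\big(\hat\Theta^{\ast(\mathrm{seg})}_y\mid y_{[N]}\big)\le R\big(\hat\Theta^{\ast(\mathrm{g\text{-}seg})}_y\mid y_{[N]}\big)\le R\big(\hat\Theta^{\ast(\mathrm{route})}_y\mid y_{[N]}\big).$$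
   Context: Convention $0/0=0$. $N_s=|\{n:s\in y_n\}|$; for a set $S$ of segments $N_S=|\{n:S\subseteq y_n\}|$; $M_{\delta(y)}=\sum_n\mathbf 1\{y_n\in\delta(y)\}$. The integrated risk is $R(\hat\Theta_y\mid y_{[N]})=\mathbb{E}[(\hat\Theta_y-\sum_{s\in y}\theta_s)^2\mid y_{[N]}]$, expectation over errors and prior of $\theta$, conditional on the historical routes. Segment-based estimator: $\sum_{s\in y}[(1-\phi_s(N_s))\mu+\phi_s(N_s)\sum_{n:s\in y_n}T'_{n,s}/N_s]$, $\phi_s(0)=0$. Generalized segment-based estimator with partition $\mathscr{S}_y$ of $y$ into disjoint nonempty super-segments: $\sum_{S\in\mathscr{S}_y}[(1-\phi_S(N_S))|S|\mu+\phi_S(N_S)\sum_{n:S\subseteq y_n}\sum_{s\in S}T'_{n,s}/N_S]$, $\phi_S(0)=0$. Route-based estimator with neighborhood $\delta(y)$ (a set of historical routes): $(1-\phi_{\delta(y)}(M_{\delta(y)}))|y|\mu+\phi_{\delta(y)}(M_{\delta(y)})\sum_{n:y_n\in\delta(y)}\sum_{s\in y_n}T'_{n,s}/M_{\delta(y)}$, $\phi_{\delta(y)}(0)=0$. In each class, ''optimal'' means the weights are chosen to minimize the integrated risk. *)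

From HB Require Import structures.
From mathcomp Require Import all_boot all_order all_algebra.
From mathcomp Require Import all_classical all_reals all_analysis.
Set Implicit Arguments. Unset Strict Implicit. Unset Printing Implicit Defensive.
Import Order.TTheory GRing.Theory Num.Theory.
Local Open Scope classical_set_scope.
Local Open Scope ring_scope.

Section Defs.
Context {d : measure_display} {T : measurableType d} {R : realType}.
Context (P : probability T R).

(** Mutual independence of groups of real random variables: the random
    variables X k (k in the admissible index set A) are partitioned into groups
    by g; the groups (i.e. the random vectors (X k)_{g k = i}) are mutually
    independent. *)
Definition groups_independent (K I : finType) (g : K -> I) (A : {set K})
    (X : K -> T -> R) : Prop :=
  forall (F : {set K}) (B : K -> set R),
    F \subset A -> (forall k, measurable (B k)) ->
    P (\big[setI/setT]_(k in F) (X k @^-1` B k)) =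
    (\prod_(i in g @: F)
        P (\big[setI/setT]_(k in F | g k == i) (X k @^-1` B k)))%E.

End Defs.

Section Model.
Context {R : realType} {S : finType} {N : nat}.

(** Index type of all random variables of the model: theta_s (inl s) and
    the errors eps_{n,s} (inr (n, s)). *)
Definition rv_index := (S + ('I_N * S))%type.

Definition rv_group (k : rv_index) : (S + 'I_N)%type :=
  match k with inl s => inl s | inr (n, _) => inr n end.

(** Only errors eps_{n,s} with s in y_n exist. *)
Definition rv_relevant (yn : 'I_N -> {set S}) : {set rv_index} :=
  [set k | match k with inl _ => true | inr (n, s) => s \in yn n end].

Definition rv_family {T : Type} (theta : S -> T -> R) (eps : 'I_N -> S -> T -> R)
  (k : rv_index) : T -> R :=
  match k with inl s => theta s | inr (n, s) => eps n s end.

Definition Tobs {T : Type} (theta : S -> T -> R) (eps : 'I_N -> S -> T -> R)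
  (n : 'I_N) (s : S) : T -> R := fun w => theta s w + eps n s w.

Definition Nseg (yn : 'I_N -> {set S}) (s : S) : nat := #|[set n | s \in yn n]|.
Definition Nsup (yn : 'I_N -> {set S}) (A : {set S}) : nat :=
  #|[set n | A \subset yn n]|.
Definition Mnb (yn : 'I_N -> {set S}) (delta : {set {set S}}) : nat :=
  #|[set n | yn n \in delta]|.

(** Segment-based estimator (x / 0 = 0 in MathComp, matching 0/0 = 0). *)
Definition seg_est {T : Type} (yn : 'I_N -> {set S}) (theta : S -> T -> R)
  (eps : 'I_N -> S -> T -> R) (mu : R) (y : {set S}) (phi : S -> R) : T -> R :=
  fun w => \sum_(s in y)
    ((1 - phi s) * mu
     + phi s * ((\sum_(n | s \in yn n) Tobs theta eps n s w) / (Nseg yn s)%:R)).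

Definition gseg_est {T : Type} (yn : 'I_N -> {set S}) (theta : S -> T -> R)
  (eps : 'I_N -> S -> T -> R) (mu : R) (Sy : {set {set S}})
  (phi : {set S} -> R) : T -> R :=
  fun w => \sum_(A in Sy)
    ((1 - phi A) * #|A|%:R * mu
     + phi A * ((\sum_(n | A \subset yn n) \sum_(s in A) Tobs theta eps n s w)
                 / (Nsup yn A)%:R)).

Definition route_est {T : Type} (yn : 'I_N -> {set S}) (theta : S -> T -> R)
  (eps : 'I_N -> S -> T -> R) (mu : R) (y : {set S}) (delta : {set {set S}})
  (phi : R) : T -> R :=
  fun w => (1 - phi) * #|y|%:R * mu
    + phi * ((\sum_(n | yn n \in delta) \sum_(s in yn n) Tobs theta eps n s w)
              / (Mnb yn delta)%:R).

Definition seg_weights (yn : 'I_N -> {set S}) : set (S -> R) :=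
  [set phi | forall s, Nseg yn s = 0%N -> phi s = 0].
Definition gseg_weights (yn : 'I_N -> {set S}) : set ({set S} -> R) :=
  [set phi | forall A, Nsup yn A = 0%N -> phi A = 0].
Definition route_weights (yn : 'I_N -> {set S}) (delta : {set {set S}}) : set R :=
  [set phi | Mnb yn delta = 0%N -> phi = 0].

Definition same_route_nb (yn : 'I_N -> {set S}) (y : {set S}) : {set {set S}} :=
  [set yn n | n : 'I_N & yn n == y].

End Model.

Section Risk.
Context {d : measure_display} {T : measurableType d} {R : realType} {S : finType}.
Context (P : probability T R).

(** Integrated risk R(Theta_hat | y_[N]) = E[(Theta_hat - sum_{s in y} theta_s)^2]
    (the routes are fixed, i.e. conditioned upon). *)
Definition risk (theta : S -> T -> R) (y : {set S}) (est : T -> R) : \bar R :=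
  'E_P[fun w => (est w - \sum_(s in y) theta s w) ^+ 2].

(** Risk of the optimal estimator of a class: the least risk over admissible
    weights (infimum, which is the minimum when the optimum is attained). *)
Definition opt_risk {W : Type} (theta : S -> T -> R) (y : {set S})
  (weights : set W) (est : W -> T -> R) : \bar R :=
  ereal_inf [set risk theta y (est phi) | phi in weights].

End Risk.

(* For a weight p shared by the segments of y, each of the three estimators has
   error (1 - p) * sum_{s in y} (mu - theta_s) + p * W, with W a linear
   combination of the errors eps_{n,s}; the generalized estimator for {y} and the
   route-based estimator both average the trips of a pool of trips covering y.
   Independence of theta from the errors kills the cross term, and independence
   across trips gives E[W^2] = sum_{s,t in y} sigma_{s,t} k_{s,t}, where
   k_{s,t} = N_{s,t} / (N_s N_t) for the segment-based estimator and 1/K for a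
   pool of K trips.  As N_{s,t} <= N_s and M_delta(y) <= N_y <= N_t, and sigma >= 0
   on y, a weight of the coarser class used in the finer class does no worse; when
   no trip qualifies the weight is forced to 0 and both estimators equal |y| mu. *)

From HB Require Import structures.
From mathcomp Require Import all_boot all_order all_algebra.
From mathcomp Require Import all_classical all_reals all_analysis.
From mathcomp Require Import measurable_realfun ring.
Import Order.TTheory GRing.Theory Num.Theory.
Local Open Scope ring_scope.
Set Implicit Arguments. Unset Strict Implicit.

Section real_expectation.
Context d (T : measurableType d) (R : realType) (P : probability T R).

Definition rexpectation (f : T -> R) : R := fine 'E_P[f]%E.

Lemma rexpectationE f : f \in Lfun P 1 -> ('E_P[f] = (rexpectation f)%:E)%E.
Proof. by move=> f1; rewrite fineK // expectation_fin_num. Qed.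

Lemma rexpectation_cst c : rexpectation (fun=> c) = c.
Proof. by rewrite /rexpectation -[fun=> c]/(cst c) expectation_cst. Qed.

Lemma rexpectationD f g : f \in Lfun P 1 -> g \in Lfun P 1 ->
  rexpectation (fun w => f w + g w) = rexpectation f + rexpectation g.
Proof.
by move=> f1 g1; rewrite /rexpectation (expectationD f1 g1) fineD ?expectation_fin_num.
Qed.

Lemma rexpectationZl a f : f \in Lfun P 1 ->
  rexpectation (fun w => a * f w) = a * rexpectation f.
Proof.
move=> f1; rewrite /rexpectation (_ : (fun w => _) = a \o* f)%R.
  by rewrite expectationZl // fineM ?expectation_fin_num.
by apply/funext => w /=; rewrite mulrC.
Qed.

Lemma rexpectation_sum (I : finType) (Q : pred I) (F : I -> T -> R) :
  (forall i, Q i -> F i \in Lfun P 1) ->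
  rexpectation (fun w => \sum_(i | Q i) F i w) = \sum_(i | Q i) rexpectation (F i).
Proof.
move=> F1; rewrite -fct_sumE.
suff [] : (\sum_(i | Q i) F i) \in Lfun P 1 /\
  rexpectation (\sum_(i | Q i) F i) = \sum_(i | Q i) rexpectation (F i) by [].
apply: (big_ind2 (fun f r => f \in Lfun P 1 /\ rexpectation f = r)).
- split; first exact: rpred0.
  exact: rexpectation_cst.
- by move=> f r g r' [f1 <-] [g1 <-]; rewrite rpredD // -rexpectationD.
- by move=> i Qi; split; first exact: F1.
Qed.

Lemma Lfun2_Lfun1 f : f \in Lfun P 2%:E -> f \in Lfun P 1.
Proof. by apply: Lfun_subset12; rewrite fin_num_measure. Qed.

Lemma Lfun_scalel a (f : T -> R) r : 1 <= r -> f \in Lfun P r%:E ->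
  (fun w => a * f w) \in Lfun P r%:E.
Proof.
move=> r1 fr; rewrite (_ : (fun w => _) = a \o* f)%R; first exact: Lfun_scale.
by apply/funext => w /=; rewrite mulrC.
Qed.

Lemma Lfun_scale_sum (I : finType) (a : I -> R) (X : I -> T -> R) r :
  1 <= r -> (forall i, X i \in Lfun P r%:E) ->
  (fun w => \sum_i a i * X i w) \in Lfun P r%:E.
Proof.
by move=> r1 Xr; rewrite -fct_sumE; apply: rpred_sum => i _; apply: Lfun_scalel.
Qed.

Lemma rexpectation_mul_sumr (I : finType) (b : I -> R) (X : T -> R) (Y : I -> T -> R) :
  X \in Lfun P 2%:E -> (forall i, Y i \in Lfun P 2%:E) ->
  rexpectation (fun w => X w * \sum_i b i * Y i w)
  = \sum_i b i * rexpectation (fun w => X w * Y i w).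
Proof.
move=> X2 Y2.
rewrite (_ : (fun w => _) = fun w => \sum_i b i * (X w * Y i w)); last first.
  by apply/funext => w; rewrite mulr_sumr; apply: eq_bigr => i _; rewrite mulrCA.
rewrite (@rexpectation_sum _ _ (fun i w => b i * (X w * Y i w))); last first.
  by move=> i _; apply: Lfun_scalel => //; exact: Lfun2_mul_Lfun1.
by apply: eq_bigr => i _; apply/rexpectationZl/Lfun2_mul_Lfun1.
Qed.

Lemma rexpectation_sqr_sum (I : finType) (a : I -> R) (X : I -> T -> R) :
  (forall i, X i \in Lfun P 2%:E) ->
  rexpectation (fun w => (\sum_i a i * X i w) ^+ 2)
  = \sum_i \sum_j a i * a j * rexpectation (fun w => X i w * X j w).
Proof.
move=> X2.
rewrite (_ : (fun w => _) = fun w => \sum_i a i * (X i w * \sum_j a j * X j w)).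
  rewrite rexpectation_sum => [|i _]; last first.
    by apply/Lfun_scalel/Lfun2_mul_Lfun1 => //; apply: Lfun_scale_sum; rewrite ?ler1n.
  apply: eq_bigr => i _; rewrite rexpectationZl; last first.
    by apply: Lfun2_mul_Lfun1 => //; apply: Lfun_scale_sum; rewrite ?ler1n.
  by rewrite rexpectation_mul_sumr // mulr_sumr; apply: eq_bigr => j _; rewrite mulrA.
by apply/funext => w; rewrite expr2 mulr_suml; apply: eq_bigr => i _; rewrite mulrA.
Qed.

Lemma rexpectation_sqrD a b (X Y : T -> R) :
  X \in Lfun P 2%:E -> Y \in Lfun P 2%:E ->
  rexpectation (fun w => (a * X w + b * Y w) ^+ 2)
  = a ^+ 2 * rexpectation (fun w => X w ^+ 2) + 2 * a * b * rexpectation (fun w => X w * Y w)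
    + b ^+ 2 * rexpectation (fun w => Y w ^+ 2).
Proof.
move=> X2 Y2; have XX := Lfun2_mul_Lfun1 X2 X2; have XY := Lfun2_mul_Lfun1 X2 Y2.
have YY := Lfun2_mul_Lfun1 Y2 Y2.
rewrite (_ : (fun w => _) = fun w => (a ^+ 2 * X w ^+ 2 + 2 * a * b * (X w * Y w))
                                     + b ^+ 2 * Y w ^+ 2); last by apply/funext => w; ring.
by rewrite !rexpectationD ?rpredD ?rexpectationZl //; apply: Lfun_scalel.
Qed.

End real_expectation.

Definition pair_fun d (T : measurableType d) (R : realType) (X Y : T -> R) : T -> R * R :=
  fun w => (X w, Y w).

HB.instance Definition _ d (T : measurableType d) (R : realType) (X Y : {mfun T >-> R}) :=
  isMeasurableFun.Build _ _ _ _ (pair_fun X Y)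
    (measurable_fun_pair (@measurable_funP _ _ _ _ setT X) (@measurable_funP _ _ _ _ setT Y)).

Section independence.
Local Open Scope classical_set_scope.
Context d (T : measurableType d) (R : realType) (P : probability T R).

Definition independent_rv2 (X Y : T -> R) : Prop :=
  forall A B, measurable A -> measurable B ->
  P (X @^-1` A `&` Y @^-1` B) = (P (X @^-1` A) * P (Y @^-1` B))%E.

(* Independence makes the joint law of (X, Y) the product of the marginals (by
   uniqueness of the product measure); Fubini then splits the integral of x * y. *)
Lemma expectationM_independent (X Y : {RV P >-> R}) :
  (X : T -> R) \in Lfun P 1 -> (Y : T -> R) \in Lfun P 1 -> (X \* Y)%R \in Lfun P 1 ->
  independent_rv2 X Y -> ('E_P[(X \* Y)%R] = 'E_P[X] * 'E_P[Y])%E.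
Proof.
move=> X1 Y1 XY1 XYind.
pose PX := distribution P X; pose PY := distribution P Y.
pose Q := distribution P (pair_fun X Y).
pose f := fun z : R * R => (z.1 * z.2)%:E.
have mf : measurable_fun setT f by apply/measurable_EFinP; apply: measurable_funM.
have QE A : measurable A -> (PX \x PY)%E A = Q A.
  by apply: product_measure_unique => {}A B mA mB; exact: XYind.
have intX : PX.-integrable setT EFin.
  apply: (integrable_pushforward (measurable_funP X)) => //.
  by rewrite preimage_setT; apply/Lfun1_integrable.
have intY : PY.-integrable setT EFin.
  apply: (integrable_pushforward (measurable_funP Y)) => //.
  by rewrite preimage_setT; apply/Lfun1_integrable.
have intQ : Q.-integrable setT f.
  apply: (integrable_pushforward (measurable_funP (pair_fun X Y))) => //.
  by rewrite preimage_setT; apply/Lfun1_integrable.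
have intPQ : (PX \x PY)%E.-integrable setT f.
  apply/integrableP; split => //.
  rewrite (eq_measure_integral Q); last by move=> A mA _; exact: QE.
  by case/integrableP: intQ.
have EX : ('E_P[X] = \int[PX]_x x%:E)%E.
  by rewrite unlock integral_distribution //; apply/Lfun1_integrable.
have EY : ('E_P[Y] = \int[PY]_y y%:E)%E.
  by rewrite unlock integral_distribution //; apply/Lfun1_integrable.
have -> : ('E_P[(X \* Y)%R] = \int[PX \x PY]_z f z)%E.
  rewrite (eq_measure_integral Q); last by move=> A mA _; exact: QE.
  by rewrite unlock integral_distribution //; apply/Lfun1_integrable.
rewrite -(integral12_prod_meas1 intPQ) /fubini_F /=.
under eq_integral => x _.
  rewrite (_ : (fun y => _) = (fun y => x%:E * y%:E)%E); last first.
    by apply/funext => y; rewrite /f /= EFinM.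
  rewrite integralZl //.
  over.
by rewrite -EY -(fineK (expectation_fin_num Y1)) integralZr // -EX.
Qed.

Lemma groups_independent_pair (K I : finType) (g : K -> I) (A : {set K})
    (X : K -> T -> R) k1 k2 :
  groups_independent P g A X -> k1 \in A -> k2 \in A -> g k1 != g k2 ->
  independent_rv2 (X k1) (X k2).
Proof.
move=> gi k1A k2A g12 B1 B2 mB1 mB2.
have k12 : k1 != k2 by apply: contraNneq g12 => ->.
pose B k := if k == k1 then B1 else if k == k2 then B2 else setT.
have mB k : measurable (B k) by rewrite /B; case: ifP => _ //; case: ifP.
have B1E : B k1 = B1 by rewrite /B eqxx.
have B2E : B k2 = B2 by rewrite /B eq_sym (negbTE k12) eqxx.
have sub : [set k1; k2]%SET \subset A.
  by apply/fintype.subsetP => k; rewrite !inE => /orP[] /eqP->.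
have := gi _ B sub mB.
rewrite big_setU1 ?inE //= big_set1 B1E B2E => ->.
rewrite imsetU1 imset_set1 big_setU1 ?inE //= big_set1.
rewrite (big_pred1 k1) => [|k]; last first.
  rewrite !inE; case: (eqVneq k k1) => [->|_]; first by rewrite eqxx.
  by case: (eqVneq k k2) => [->|] //=; rewrite eq_sym (negbTE g12).
rewrite (big_pred1 k2) => [|k]; last first.
  rewrite !inE; case: (eqVneq k k2) => [->|_]; first by rewrite eqxx orbT.
  by case: (eqVneq k k1) => [->|] //=; rewrite (negbTE g12).
by rewrite B1E B2E.
Qed.

Lemma rexpectationM_independent (X Y : {RV P >-> R}) :
  (X : T -> R) \in Lfun P 2%:E -> (Y : T -> R) \in Lfun P 2%:E -> independent_rv2 X Y ->
  rexpectation P (fun w => X w * Y w) = rexpectation P X * rexpectation P Y.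
Proof.
move=> X2 Y2 XY; rewrite /rexpectation -fineM ?expectation_fin_num ?Lfun2_Lfun1 //.
by rewrite -expectationM_independent ?Lfun2_mul_Lfun1 ?Lfun2_Lfun1.
Qed.

End independence.

Lemma card_classical_set (I : finType) (Q : pred I) :
  #|[set i | Q i]%classic| = #|[set i | Q i]|.
Proof. by apply: eq_card => i; rewrite [RHS]inE; apply/idP/idP; rewrite in_setE. Qed.

Lemma sumr_const_set (R : nmodType) (I : finType) (Q : pred I) (x : R) :
  \sum_(i | Q i) x = x *+ #|[set i | Q i]|.
Proof. by rewrite -big_set sumr_const. Qed.

Lemma lef_inv_nat (F : numFieldType) (k b : nat) :
  (0 < k)%N -> (k <= b)%N -> b%:R^-1 <= k%:R^-1 :> F.
Proof.
move=> k0 kb; have b0 : (0 < b)%N by apply: leq_trans kb.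
by rewrite lef_pV2 ?ler_nat // posrE ltr0n.
Qed.

Lemma ler_nat_ratio (F : numFieldType) (c a b k : nat) :
  (c <= a)%N -> (0 < k)%N -> (k <= b)%N -> c%:R / (a%:R * b%:R) <= k%:R^-1 :> F.
Proof.
move=> ca k0 kb; case: (posnP a) => [a0|a0].
  by move: ca; rewrite a0 leqn0 => /eqP->; rewrite mul0r invr_ge0.
rewrite invfM mulrA -[leRHS]mul1r ler_pM ?mulr_ge0 ?invr_ge0 ?lef_inv_nat //.
by rewrite ler_pdivrMr ?ltr0n // mul1r ler_nat.
Qed.

Lemma le_ereal_inf_image (R : realType) (U V : Type) (A : set U) (B : set V)
    (f : U -> \bar R) (g : V -> \bar R) :
  (forall v, B v -> exists2 u, A u & (f u <= g v)%E) ->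
  (ereal_inf (f @` A) <= ereal_inf (g @` B))%E.
Proof.
move=> fg; apply: le_ereal_inf_tmp => _ [v Bv <-].
have [u Au fugv] := fg v Bv.
by apply: le_trans fugv; apply: ereal_inf_lbound; exists u.
Qed.

Section estimator_errors.
Context {R : realType} {S : finType} {N : nat} {T : Type}.
Variables (yn : 'I_N -> {set S}) (y : {set S}).
Variables (th : S -> T -> R) (ep : 'I_N -> S -> T -> R) (mu : R).

Definition pooled_est (pool : pred 'I_N) (p : R) : T -> R :=
  fun w => (1 - p) * #|y|%:R * mu
    + p * ((\sum_(n | pool n) \sum_(s in y) Tobs th ep n s w) / #|[set n | pool n]|%:R).

Definition theta_dev : T -> R := fun w => \sum_(s in y) (mu - th s w).

(* eps_{n,s} exists only for s in y_n; extending it by 0 writes the error of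
   every estimator as a combination over all pairs (s, n). *)
Definition masked_err (s : S) (n : 'I_N) : T -> R :=
  fun w => if s \in yn n then ep n s w else 0.

Definition err_comb (c : S -> 'I_N -> R) : T -> R :=
  fun w => \sum_s \sum_n c s n * masked_err s n w.

Definition seg_coef (s : S) (n : 'I_N) : R :=
  if s \in y then (Nseg yn s)%:R^-1 else 0.

Definition pool_coef (pool : pred 'I_N) (s : S) (n : 'I_N) : R :=
  if (s \in y) && pool n then #|[set n | pool n]|%:R^-1 else 0.

Lemma seg_est_error psi p w :
  (forall s, s \in y -> psi s = p) -> (forall s, s \in y -> (0 < Nseg yn s)%N) ->
  seg_est yn th ep mu y psi w - \sum_(s in y) th s w
  = (1 - p) * theta_dev w + p * err_comb seg_coef w.
Proof.
move=> psiE Nsy.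
have -> : err_comb seg_coef w
    = \sum_(s in y) (Nseg yn s)%:R^-1 * \sum_(n | s \in yn n) ep n s w.
  rewrite [RHS]big_mkcond; apply: eq_bigr => s _; rewrite /seg_coef.
  case: ifP => sy; last by rewrite big1 // => n _; rewrite mul0r.
  rewrite mulr_sumr [RHS]big_mkcond; apply: eq_bigr => n _.
  by rewrite /masked_err; case: ifP; rewrite ?mulr0.
rewrite /theta_dev /seg_est -sumrB !mulr_sumr -big_split /=.
apply: eq_bigr => s sy; rewrite psiE // big_split /= sumr_const_set.
have Ns0 : (Nseg yn s)%:R != 0 :> R by rewrite pnatr_eq0 -lt0n Nsy.
rewrite /Nseg card_classical_set in Ns0 *.
by field.
Qed.

Lemma pooled_est_error (pool : pred 'I_N) p w :
  (forall n, pool n -> y \subset yn n) -> (0 < #|[set n | pool n]|)%N ->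
  pooled_est pool p w - \sum_(s in y) th s w
  = (1 - p) * theta_dev w + p * err_comb (pool_coef pool) w.
Proof.
move=> pool_y pool0; set K := #|[set n | pool n]|.
have K0 : K%:R != 0 :> R by rewrite pnatr_eq0 -lt0n.
have -> : err_comb (pool_coef pool) w
    = K%:R^-1 * \sum_(n | pool n) \sum_(s in y) ep n s w.
  rewrite /err_comb exchange_big mulr_sumr [RHS]big_mkcond; apply: eq_bigr => n _ /=.
  case: (boolP (pool n)) => pn; last first.
    by rewrite big1 // => s _; rewrite /pool_coef (negbTE pn) andbF mul0r.
  rewrite mulr_sumr [RHS]big_mkcond; apply: eq_bigr => s _.
  rewrite /pool_coef /masked_err pn andbT.
  case: ifP => sy; last by rewrite mul0r.
  by rewrite (fintype.subsetP (pool_y n pn) s sy).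
rewrite /pooled_est.
have -> : \sum_(n | pool n) \sum_(s in y) Tobs th ep n s w
    = K%:R * \sum_(s in y) th s w + \sum_(n | pool n) \sum_(s in y) ep n s w.
  rewrite mulr_natl -sumr_const_set -big_split /=.
  by apply: eq_bigr => n _; rewrite big_split.
rewrite /theta_dev sumrB sumr_const -mulr_natl.
by field.
Qed.

Lemma seg_est0 : seg_est yn th ep mu y (fun=> 0) = fun=> #|y|%:R * mu.
Proof.
apply/funext => w; rewrite /seg_est mulr_natl -sumr_const.
by apply: eq_bigr => s _; rewrite subr0 mul1r mul0r addr0.
Qed.

Lemma pooled_est0 pool : pooled_est pool 0 = fun=> #|y|%:R * mu.
Proof. by apply/funext => w; rewrite /pooled_est subr0 mul1r mul0r addr0. Qed.

Lemma gseg_est_single phi :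
  gseg_est yn th ep mu [set y] phi = pooled_est (fun n => y \subset yn n) (phi y).
Proof. by apply/funext => w; rewrite /gseg_est big_set1 /Nsup card_classical_set. Qed.

Lemma same_route_nbP n : (yn n \in same_route_nb yn y) = (yn n == y).
Proof.
apply/imsetP/eqP => [[m]|ny]; first by rewrite inE => /eqP <- ->.
by exists n; rewrite ?inE ?ny.
Qed.

Lemma Mnb_same_route : Mnb yn (same_route_nb yn y) = #|[set n | yn n == y]|.
Proof.
rewrite /Mnb card_classical_set; apply: eq_card => n.
by rewrite !inE same_route_nbP.
Qed.

Lemma route_est_same_route phi :
  route_est yn th ep mu y (same_route_nb yn y) phi = pooled_est (fun n => yn n == y) phi.
Proof.
apply/funext => w; rewrite /route_est /pooled_est Mnb_same_route.
rewrite (eq_bigl (fun n => yn n == y)) => [|n]; last exact: same_route_nbP.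
by congr (_ + _ * (_ / _)); apply: eq_big => // n /eqP ->.
Qed.

End estimator_errors.

Section trip_counts.
Context {R : realType} {S : finType} {N : nat}.
Variables (yn : 'I_N -> {set S}) (y : {set S}).

Lemma card_pool_le_Nsup (pool : pred 'I_N) (A : {set S}) :
  (forall n, pool n -> A \subset yn n) -> (#|[set n | pool n]| <= Nsup yn A)%N.
Proof.
move=> pool_A; rewrite /Nsup card_classical_set; apply: subset_leq_card.
by apply/fintype.subsetP => n; rewrite !inE; exact: pool_A.
Qed.

Lemma Nsup_le_Nseg (A : {set S}) s : s \in A -> (Nsup yn A <= Nseg yn s)%N.
Proof.
move=> sA; rewrite /Nsup /Nseg !card_classical_set; apply: subset_leq_card.
by apply/fintype.subsetP => n; rewrite !inE => /fintype.subsetP; apply.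
Qed.

Definition overlap (c : S -> 'I_N -> R) (s t : S) : R :=
  \sum_n if (s \in yn n) && (t \in yn n) then c s n * c t n else 0.

Lemma sum_overlap_supp (sigma : S -> S -> R) (c : S -> 'I_N -> R) :
  (forall s n, s \notin y -> c s n = 0) ->
  \sum_s \sum_t sigma s t * overlap c s t
  = \sum_(s in y) \sum_(t in y) sigma s t * overlap c s t.
Proof.
move=> c0.
have overlap0 s t : (s \notin y) || (t \notin y) -> overlap c s t = 0.
  move=> st_y; apply: big1 => n _; case: ifP => // _.
  by case/orP: st_y => /c0 ->; rewrite ?mul0r ?mulr0.
rewrite [RHS]big_mkcond; apply: eq_bigr => s _.
case: ifP => sy; last by rewrite big1 // => t _; rewrite overlap0 ?sy ?mulr0.
rewrite [RHS]big_mkcond; apply: eq_bigr => t _.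
by case: ifP => ty //; rewrite overlap0 ?ty ?orbT ?mulr0.
Qed.

Lemma overlap_seg_coef s t : s \in y -> t \in y ->
  overlap (seg_coef yn y) s t
  = (Nsup yn [set s; t])%:R / ((Nseg yn s)%:R * (Nseg yn t)%:R).
Proof.
move=> sy ty; rewrite /overlap /seg_coef sy ty -big_mkcond sumr_const_set.
rewrite /Nsup card_classical_set [RHS]mulr_natl invfM.
congr (_ *+ _); apply: eq_card => n.
by rewrite !inE finset.subUset !finset.sub1set.
Qed.

Lemma overlap_pool_coef (pool : pred 'I_N) s t :
  (forall n, pool n -> y \subset yn n) -> (0 < #|[set n | pool n]|)%N ->
  s \in y -> t \in y -> overlap (pool_coef y pool) s t = #|[set n | pool n]|%:R^-1.
Proof.
move=> pool_y pool0 sy ty; set K := #|[set n | pool n]|.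
have K0 : K%:R != 0 :> R by rewrite pnatr_eq0 -lt0n.
rewrite /overlap /pool_coef sy ty.
rewrite (eq_bigr (fun n => if pool n then K%:R^-1 * K%:R^-1 else 0)) => [|n _].
  by rewrite -big_mkcond sumr_const_set -/K -mulr_natr; field.
case: (boolP (pool n)) => [pn|_]; last by case: ifP; rewrite ?mul0r.
by rewrite !(fintype.subsetP (pool_y n pn)).
Qed.

End trip_counts.

Section risk_formula.
Context d (T : measurableType d) (R : realType) (P : probability T R) (S : finType) (N : nat).
Variables (yn : 'I_N -> {set S}) (y : {set S}).
Variables (theta : S -> {RV P >-> R}) (eps : 'I_N -> S -> {RV P >-> R}).
Variables (mu : R) (sigma : S -> S -> R).
Hypothesis theta_L2 : forall s, (theta s : T -> R) \in Lfun P 2%:E.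
Hypothesis eps_L2 : forall n s, s \in yn n -> (eps n s : T -> R) \in Lfun P 2%:E.
Hypothesis eps_mean0 : forall n s, s \in yn n -> ('E_P[eps n s] = 0)%E.
Hypothesis eps_cov : forall n s t, s \in yn n -> t \in yn n ->
  covariance P (eps n s) (eps n t) = (sigma s t)%:E.
Hypothesis indep : groups_independent P (@rv_group S N) (rv_relevant yn)
  (rv_family (fun s => (theta s : T -> R)) (fun n s => (eps n s : T -> R))).

Local Notation th := (fun s => (theta s : T -> R)).
Local Notation ep := (fun n s => (eps n s : T -> R)).
Local Notation err := (masked_err yn ep).
Local Notation W := (err_comb yn ep).
Local Notation D := (theta_dev y th mu).

Let one_le_two : (1 <= 2%:E :> \bar R)%E.
Proof. by rewrite lee_fin ler1n. Qed.

Lemma masked_err_L2 s n : err s n \in Lfun P 2%:E.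
Proof.
rewrite /masked_err; case: (boolP (s \in yn n)) => [sn|_]; first exact: eps_L2.
exact: (Lfun_cst _ 0).
Qed.

Lemma theta_dev_L2 : D \in Lfun P 2%:E.
Proof.
rewrite /theta_dev -fct_sumE; apply: rpred_sum => s _.
by apply: rpredB; [exact: Lfun_cst | exact: theta_L2].
Qed.

Let rexpectation_err_indep (X : {RV P >-> R}) t m :
  (X : T -> R) \in Lfun P 2%:E -> independent_rv2 P X (eps m t) -> t \in yn m ->
  rexpectation P (fun w => X w * eps m t w) = 0.
Proof.
move=> X2 Xind tm; rewrite rexpectationM_independent ?eps_L2 //.
suff -> : rexpectation P (eps m t) = 0 by rewrite mulr0.
by rewrite /rexpectation eps_mean0.
Qed.

Lemma rexpectation_err_err s n t m :
  rexpectation P (fun w => err s n w * err t m w)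
  = if [&& s \in yn n, t \in yn m & n == m] then sigma s t else 0.
Proof.
rewrite /masked_err; case: (boolP (s \in yn n)) => sn /=; last first.
  by under eq_fun do rewrite mul0r; exact: rexpectation_cst.
case: (boolP (t \in yn m)) => tm /=; last first.
  by under eq_fun do rewrite mulr0; exact: rexpectation_cst.
case: (eqVneq n m) tm => [<-|nm] tm.
  have := eps_cov sn tm; rewrite covarianceE ?Lfun2_mul_Lfun1 ?Lfun2_Lfun1 ?eps_L2 //.
  by rewrite !eps_mean0 // mul0e sube0 /rexpectation => ->.
apply: rexpectation_err_indep => //; first exact: eps_L2.
apply: (groups_independent_pair (k1 := inr (n, s)) (k2 := inr (m, t)) indep).
- by rewrite inE.
- by rewrite inE.
- by apply: contra_neq nm => -[].
Qed.

Lemma rexpectation_theta_dev_err t m : rexpectation P (fun w => D w * err t m w) = 0.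
Proof.
have err2 := masked_err_L2 t m.
have err0 : rexpectation P (err t m) = 0.
  rewrite /masked_err; case: (boolP (t \in yn m)) => tm /=.
    by rewrite /rexpectation eps_mean0.
  exact: rexpectation_cst.
have theta_err s : rexpectation P (fun w => theta s w * err t m w) = 0.
  rewrite /masked_err; case: (boolP (t \in yn m)) => tm /=.
    apply: rexpectation_err_indep => //.
    by apply: (groups_independent_pair (k1 := inl s) (k2 := inr (m, t)) indep); rewrite ?inE.
  by under eq_fun do rewrite mulr0; exact: rexpectation_cst.
rewrite (_ : (fun w => _)
    = fun w => \sum_(s in y) (mu * err t m w + (-1) * (theta s w * err t m w))); last first.
  by apply/funext => w; rewrite /theta_dev mulr_suml; apply: eq_bigr => s _; ring.
rewrite rexpectation_sum => [|s _]; last first.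
  by rewrite rpredD ?Lfun_scalel ?Lfun2_mul_Lfun1 ?Lfun2_Lfun1.
apply: big1 => s _.
by rewrite rexpectationD ?rexpectationZl ?Lfun_scalel ?Lfun2_mul_Lfun1 ?Lfun2_Lfun1 // err0 theta_err !mulr0 addr0.
Qed.

Lemma rexpectation_err_comb_sqr c :
  rexpectation P (fun w => W c w ^+ 2) = \sum_s \sum_t sigma s t * overlap yn c s t.
Proof.
under eq_fun do rewrite /err_comb pair_bigA /=.
rewrite rexpectation_sqr_sum => [|q]; last exact: masked_err_L2.
transitivity (\sum_s \sum_n \sum_t \sum_m
    c s n * c t m * rexpectation P (fun w => err s n w * err t m w)).
  by rewrite [RHS]pair_bigA; apply: eq_bigr => q _; rewrite [RHS]pair_bigA.
apply: eq_bigr => s _; rewrite exchange_big; apply: eq_bigr => t _ /=.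
rewrite /overlap mulr_sumr; apply: eq_bigr => n _.
rewrite (bigD1 n) //= big1 => [|m /negbTE mn]; last first.
  by rewrite rexpectation_err_err eq_sym mn !andbF mulr0.
rewrite rexpectation_err_err eqxx andbT addr0.
by case: ifP => _; rewrite ?mulr0 // mulrC.
Qed.

Lemma risk_of_error (est : T -> R) p c :
  (forall w, est w - \sum_(s in y) theta s w = (1 - p) * D w + p * W c w) ->
  risk P th y est = ((1 - p) ^+ 2 * rexpectation P (fun w => D w ^+ 2)
                     + p ^+ 2 * \sum_s \sum_t sigma s t * overlap yn c s t)%:E.
Proof.
move=> estE.
have W2 : W c \in Lfun P 2%:E.
  rewrite /err_comb -fct_sumE; apply: rpred_sum => s _.
  by apply: Lfun_scale_sum => [|n]; [exact: ler1n | exact: masked_err_L2].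
rewrite /risk (_ : (fun w => _) = fun w => ((1 - p) * D w + p * W c w) ^+ 2); last first.
  by apply/funext => w; rewrite estE.
rewrite rexpectationE; last first.
  by apply: Lfun2_mul_Lfun1; rewrite rpredD ?Lfun_scalel ?theta_dev_L2.
rewrite rexpectation_sqrD ?theta_dev_L2 // rexpectation_err_comb_sqr.
suff -> : rexpectation P (fun w => D w * W c w) = 0 by rewrite mulr0 addr0.
rewrite /err_comb; under eq_fun do rewrite pair_bigA /=.
rewrite rexpectation_mul_sumr; last 2 first.
- exact: theta_dev_L2.
- by move=> q; exact: masked_err_L2.
by apply: big1 => q _; rewrite rexpectation_theta_dev_err mulr0.
Qed.

Lemma risk_seg_est psi p :
  (forall s, s \in y -> psi s = p) -> (forall s, s \in y -> (0 < Nseg yn s)%N) ->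
  risk P th y (seg_est yn th ep mu y psi)
  = ((1 - p) ^+ 2 * rexpectation P (fun w => D w ^+ 2)
     + p ^+ 2 * \sum_(s in y) \sum_(t in y)
         sigma s t * ((Nsup yn [set s; t])%:R / ((Nseg yn s)%:R * (Nseg yn t)%:R)))%:E.
Proof.
move=> psiE Nsy; rewrite (@risk_of_error _ p (seg_coef yn y)) => [|w]; last exact: seg_est_error.
rewrite (@sum_overlap_supp _ _ _ yn y) => [|s n /negbTE sy]; last by rewrite /seg_coef sy.
congr (_ + _ * _)%:E; apply: eq_bigr => s sy; apply: eq_bigr => t ty.
by rewrite overlap_seg_coef.
Qed.

Lemma risk_pooled_est (pool : pred 'I_N) p :
  (forall n, pool n -> y \subset yn n) -> (0 < #|[set n | pool n]|)%N ->
  risk P th y (pooled_est y th ep mu pool p)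
  = ((1 - p) ^+ 2 * rexpectation P (fun w => D w ^+ 2)
     + p ^+ 2 * \sum_(s in y) \sum_(t in y) sigma s t / #|[set n | pool n]|%:R)%:E.
Proof.
move=> pool_y pool0.
rewrite (@risk_of_error _ p (pool_coef y pool)) => [|w]; last exact: pooled_est_error.
rewrite (@sum_overlap_supp _ _ _ yn y) => [|s n /negbTE sy]; last by rewrite /pool_coef sy.
congr (_ + _ * _)%:E; apply: eq_bigr => s sy; apply: eq_bigr => t ty.
by rewrite overlap_pool_coef.
Qed.

Hypothesis sigma_ge0 : forall s t, s \in y -> t \in y -> 0 <= sigma s t.

Lemma risk_seg_le_pooled psi p (pool : pred 'I_N) :
  (forall s, s \in y -> psi s = p) ->
  (forall n, pool n -> y \subset yn n) -> (0 < #|[set n | pool n]|)%N ->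
  (risk P th y (seg_est yn th ep mu y psi) <= risk P th y (pooled_est y th ep mu pool p))%E.
Proof.
move=> psiE pool_y pool0.
have K_le s : s \in y -> (#|[set n | pool n]| <= Nseg yn s)%N.
  by move=> sy; apply: leq_trans (card_pool_le_Nsup pool_y) (Nsup_le_Nseg yn sy).
rewrite (risk_seg_est psiE) => [|s sy]; last exact: leq_trans pool0 (K_le s sy).
rewrite risk_pooled_est // lee_fin lerD2l ler_wpM2l ?sqr_ge0 //.
apply: ler_sum => s sy; apply: ler_sum => t ty; apply: ler_wpM2l; first exact: sigma_ge0.
apply: ler_nat_ratio; [|exact: pool0|exact: K_le].
by apply: Nsup_le_Nseg; rewrite !inE eqxx.
Qed.

Lemma risk_pooled_le p (pool1 pool2 : pred 'I_N) :
  (forall n, pool1 n -> y \subset yn n) -> (forall n, pool2 n -> y \subset yn n) ->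
  (0 < #|[set n | pool1 n]|)%N -> (#|[set n | pool1 n]| <= #|[set n | pool2 n]|)%N ->
  (risk P th y (pooled_est y th ep mu pool2 p) <= risk P th y (pooled_est y th ep mu pool1 p))%E.
Proof.
move=> pool1_y pool2_y pool1_0 le_pool.
rewrite !risk_pooled_est //; last exact: leq_trans le_pool.
rewrite lee_fin lerD2l ler_wpM2l ?sqr_ge0 //.
apply: ler_sum => s sy; apply: ler_sum => t ty.
by rewrite ler_wpM2l ?sigma_ge0 ?lef_inv_nat.
Qed.

Lemma seg_dominates_gseg phi : gseg_weights yn phi ->
  exists2 psi, seg_weights yn psi &
    (risk P th y (seg_est yn th ep mu y psi)
     <= risk P th y (gseg_est yn th ep mu [set y] phi))%E.
Proof.
move=> phi_w; rewrite gseg_est_single.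
exists (fun s => if Nseg yn s == 0%N then 0 else phi y) => [s ->|]; first by rewrite eqxx.
have [Ny0|Ny_pos] := posnP (Nsup yn y).
  rewrite phi_w // pooled_est0 (_ : (fun s => _) = fun=> 0) ?seg_est0 //.
  by apply/funext => s; case: ifP.
apply: risk_seg_le_pooled => [s sy|//|]; last by move: Ny_pos; rewrite /Nsup card_classical_set.
by rewrite eqn0Ngt (leq_trans Ny_pos (Nsup_le_Nseg yn sy)).
Qed.

Lemma gseg_dominates_route phi : route_weights yn (same_route_nb yn y) phi ->
  exists2 phi', gseg_weights yn phi' &
    (risk P th y (gseg_est yn th ep mu [set y] phi')
     <= risk P th y (route_est yn th ep mu y (same_route_nb yn y) phi))%E.
Proof.
move=> phi_w; rewrite route_est_same_route.
exists (fun A => if Nsup yn A == 0%N then 0 else phi) => [A ->|]; first by rewrite eqxx.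
rewrite gseg_est_single.
have [M0|M_pos] := posnP #|[set n | yn n == y]|.
  by rewrite phi_w ?Mnb_same_route // if_same !pooled_est0.
have M_le : (#|[set n | yn n == y]| <= Nsup yn y)%N.
  by apply: card_pool_le_Nsup => n /eqP ->.
rewrite eqn0Ngt (leq_trans M_pos M_le) /=.
apply: risk_pooled_le => // [n /eqP -> //|].
by rewrite /Nsup card_classical_set in M_le.
Qed.

End risk_formula.

Local Open Scope classical_set_scope.
Local Open Scope ring_scope.

Theorem proposition2p6 (d : measure_display) (T : measurableType d) (R : realType)
  (P : probability T R) (S : finType) (N : nat)
  (yn : 'I_N -> {set S}) (y : {set S})
  (theta : S -> {RV P >-> R}) (eps : 'I_N -> S -> {RV P >-> R})
  (mu tau2 : R) (sigma : S -> S -> R) :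
  (forall n, yn n != finset.set0) ->
  y != finset.set0 ->
  (* theta_s : i.i.d. with mean mu and variance tau2 > 0 *)
  0 < tau2 ->
  (forall s, (theta s : T -> R) \in Lfun P 2%E) ->
  (forall s, ('E_P[theta s] = mu%:E)%E) ->
  (forall s, ('V_P[theta s] = tau2%:E)%E) ->
  (forall s t (B : set R), measurable B ->
     P (theta s @^-1` B) = P (theta t @^-1` B)) ->
  (* errors of trip n: mean 0, covariances sigma *)
  (forall n s, s \in yn n -> (eps n s : T -> R) \in Lfun P 2%E) ->
  (forall n s, s \in yn n -> ('E_P[eps n s] = 0)%E) ->
  (forall n s t, s \in yn n -> t \in yn n ->
     covariance P (eps n s) (eps n t) = (sigma s t)%:E) ->
  (* independence: theta_s's, and the error vectors of distinct trips *)
  groups_independent P (@rv_group S N) (rv_relevant yn)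
    (rv_family (fun s => (theta s : T -> R)) (fun n s => (eps n s : T -> R))) ->
  (* nonnegative error covariances on y *)
  (forall s t, s \in y -> t \in y -> 0 <= sigma s t) ->
  let th := fun s => (theta s : T -> R) in
  let ep := fun n s => (eps n s : T -> R) in
  (opt_risk P th y (seg_weights yn) (seg_est yn th ep mu y)
   <= opt_risk P th y (gseg_weights yn) (gseg_est yn th ep mu [set y])
   <= opt_risk P th y (route_weights yn (same_route_nb yn y))
        (route_est yn th ep mu y (same_route_nb yn y)))%E.
Proof.
(* The law of the theta_s enters only through E[(sum_{s in y} (mu - theta_s))^2],
   which is common to all the risks compared. *)
move=> _ _ _ theta_L2 _ _ _ eps_L2 eps_mean0 eps_cov indep sigma_ge0; cbv zeta.
apply/andP; split; apply: le_ereal_inf_image => phi.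
- exact: (seg_dominates_gseg mu theta_L2 eps_L2 eps_mean0 eps_cov indep sigma_ge0).
- exact: (gseg_dominates_route mu theta_L2 eps_L2 eps_mean0 eps_cov indep sigma_ge0).
Qed.
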